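(* Fix any values of the utility parameters ($\beta$, $\alpha$, $\pi$) and of the discount factor $\delta\in(0,1)$. If the adversary is not restricted by timely punishments, then no protocol enforces accountability.
   Context: Model. There are $n$ agents $\mathcal N=\{1,\dots,n\}$ in a synchronous system with rounds $m=1,2,\dots$. Evolving graphs. An evolving graph is a sequence $G=(G^m)_{m\ge1}$ of undirected graphs on $\mathcal N$. Before execution an oblivious adversary fixes some $G\in\mathcal G^*$, where the set $\mathcal G^*$ of possible evolving graphs is common knowledge. At round $m$, before acting, agent $i$ learns a set $\mathcal G_i^m$ of graphs containing $G^m$; this at least determines $i$'s round-$m$ neighbours. Actions. In each round, every pair of neighbours $i,j$ simultaneously chooses an individual action toward each other: - defect: omit messages; - cooperate: send its value plus monitoring information; - punish: send messages while causing a utility loss to the other. Each learns the other's individual action only at the end of the round. A round-$m$ action of $i$ lists its individual actions toward all of its round-$m$ neighbours. A history is the sequence of past action profiles together with $G$. An information set $I_i$ of $i$ is the set of histories consistent with $i$'s observations, which are: the sets $\mathcal G_i^{m'}$, $i$'s own past actions, and the individual actions of neighbours toward $i$. Agents have perfect recall. $\mathcal I_i(G)$ denotes $i$'s information sets compatible with $G$. A strategy $\sigma_i$ maps each information set to a distribution over actions; a protocol is a strategy profile $\vec\sigma$. Utility. In each round, for each neighbour $j$, agent $i$ gets: - benefit $\beta$ if $j$ cooperates or punishes (and $i$ does not avoid a punishment); - cost $1$ if $i$ cooperates or punishes; - cost $\alpha\ge0$ for receiving $j$'s messages; - loss $\pi$ if $j$ punishes $i$. Utilities are discounted by $\delta\in(0,1)$.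 We write $u_i(\vec\sigma\mid G,h)$ for the expected sum over rounds $m'\ge m$ of $\delta^{m'-m}$ times the round-$m'$ utility, given a round-$m$ history $h$. Then $u_i(\vec\sigma\mid G,I_i)=\sum_{h\in I_i}\mu(h\mid G,I_i)\,u_i(\vec\sigma\mid G,h)$ for a belief system $\mu$. Consistent beliefs. A belief system $\mu$ is consistent with $\vec\sigma$ and $\mathcal G^*$ if there are completely mixed protocols $\vec\sigma^c\to\vec\sigma$ such that for all $G\in\mathcal G^*$, $i$, $I_i$ and $h\in I_i$, $$\mu(h\mid G,I_i)=\lim_c \Pr^{\vec\sigma^c}(h\mid G)\Big/\sum_{h'\in I_i}\Pr^{\vec\sigma^c}(h'\mid G).$$ Equilibrium. $\vec\sigma^*$ is a $\mathcal G^*$-Oblivious Adversary Perfect Equilibrium ($\mathcal G^*$-OAPE) if some such consistent $\mu^*$ satisfies, for all $G\in\mathcal G^*$, agents $i$, strategies $\sigma_i$ and $I_i\in\mathcal I_i(G)$, $$u_i(\vec\sigma^*\mid G,I_i)\ge u_i((\sigma_i,\vec\sigma^*_{-i})\mid G,I_i).$$ A protocol enforces accountability if (1) agents always cooperate until some agent deviates, and (2) it is a $\mathcal G^*$-OAPE. Causal influence. An $i$-edge of $G$ is a pair $(j,m)$ with $\{i,j\}$ an edge of $G^m$. $(j,m)\leadsto^G(l,m')$ means: $m<m'$ and there is a chain $j=o_0,o_1,\dots,o_k=l$ ($k\ge0$) and rounds $m\le m_1<\dots<m_k<m'$ with $\{o_{t-1},o_t\}$ an edge of $G^{m_t}$.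 $(j,m)\leadsto_i^G(l,m')$ means the same with no intermediate agent $o_t$ ($0\le t<k$) equal to $i$. Punishment opportunities. A punishment opportunity (PO) of $i$ for $i$-edge $(j,m)$ in $G$ is an $i$-edge $(l,m')$ with $(j,m)\leadsto_i^G(l,m')$. The adversary is restricted by timely punishments if there is $\rho>0$ such that for every $G\in\mathcal G^*$, agent $i$ and $i$-edge $(j,m)$ of $G$ there is a PO $(l,m')$ of $i$ for $(j,m)$ with $m'<m+\rho$. *)

From Stdlib Require Import Reals List Arith ClassicalEpsilon.
Import ListNotations.
Open Scope R_scope.

Definition Graph := nat -> nat -> bool.

Definition wf_graph (n : nat) (g : Graph) : Prop :=
  (forall i j, g i j = g j i) /\ (forall i, g i i = false) /\
  (forall i j, g i j = true -> (i < n)%nat /\ (j < n)%nat).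

(* Evolving graph: round m (paper's round m+1) graph is G m. *)
Definition EG := nat -> Graph.

Definition nbrs (n : nat) (g : Graph) (i : nat) : list nat :=
  filter (fun j => g i j) (seq 0 n).
Definition deg (n : nat) (g : Graph) (i : nat) : nat := length (nbrs n g i).

Fixpoint chain_avoid (G : EG) (i o lo : nat) (steps : list (nat * nat))
  (l m' : nat) : Prop :=
  match steps with
  | [] => o = l
  | (o', mt) :: rest =>
      o <> i /\ (lo <= mt)%nat /\ (mt < m')%nat /\ G mt o o' = true /\
      chain_avoid G i o' (S mt) rest l m'
  end.

Definition influences_avoiding (G : EG) (i j m l m' : nat) : Prop :=
  (m < m')%nat /\ exists steps, chain_avoid G i j m steps l m'.

Definition punishment_opportunity (G : EG) (i j m l m' : nat) : Prop :=
  G m' i l = true /\ influences_avoiding G i j m l m'.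

(* rho is a natural number: for integer rounds, "exists real rho > 0" with
   m' < m + rho is equivalent to "exists natural rho > 0". *)
Definition restricted_by_timely_punishments (Gs : EG -> Prop) : Prop :=
  exists rho : nat, (0 < rho)%nat /\
    forall G, Gs G -> forall i j m, G m i j = true ->
      exists l m', punishment_opportunity G i j m l m' /\ (m' < m + rho)%nat.

Inductive IAct := Defect | Coop | Punish.

(* an action of agent i at a round: list of individual actions toward its
   neighbours (in the order of nbrs) *)
Definition Action := list IAct.
(* an action profile: the list of actions of agents 0..n-1 *)
Definition Profile := list Action.
(* the profile part of a round-m history (rounds 0..m-1); the evolving graph
   is carried separately *)
Definition Hist := list Profile.

Fixpoint all_lists (k : nat) : list Action :=
  match k with
  | O => [[]]
  | S k => flat_map (fun a => map (cons a) (all_lists k)) [Defect; Coop; Punish]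
  end.

Fixpoint profiles_of (ds : list nat) : list Profile :=
  match ds with
  | [] => [[]]
  | d :: ds => flat_map (fun a => map (cons a) (profiles_of ds)) (all_lists d)
  end.

Definition round_profiles (n : nat) (G : EG) (k : nat) : list Profile :=
  profiles_of (map (fun i => deg n (G k) i) (seq 0 n)).

Fixpoint ext (n : nat) (G : EG) (m r : nat) : list Hist :=
  match r with
  | O => [[]]
  | S r => flat_map (fun a => map (cons a) (ext n G (S m) r)) (round_profiles n G m)
  end.

Definition hist (n : nat) (G : EG) (m : nat) : list Hist := ext n G 0 m.

Fixpoint index_of (j : nat) (l : list nat) : nat :=
  match l with
  | [] => O
  | x :: l => if Nat.eqb x j then O else S (index_of j l)
  end.

Definition act_toward (n : nat) (g : Graph) (i j : nat) (a : Action) : IAct :=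
  nth (index_of j (nbrs n g i)) a Defect.

Definition sends (x : IAct) : bool :=
  match x with Defect => false | _ => true end.
Definition is_punish (x : IAct) : bool :=
  match x with Punish => true | _ => false end.

Definition pair_utility (beta alpha pi : R) (x y : IAct) : R :=
  (if sends y then beta else 0) - (if sends x then 1 else 0)
  - (if sends y then alpha else 0) - (if is_punish y then pi else 0).

Definition sum_over {A} (l : list A) (f : A -> R) : R :=
  fold_right (fun x acc => f x + acc) 0 l.
Definition prod_over {A} (l : list A) (f : A -> R) : R :=
  fold_right (fun x acc => f x * acc) 1 l.
Definition sum_if {A} (l : list A) (P : A -> Prop) (f : A -> R) : R :=
  sum_over l (fun x => if excluded_middle_informative (P x) then f x else 0).

Definition round_utility (n : nat) (beta alpha pi : R) (g : Graph)
  (a : Profile) (i : nat) : R :=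
  sum_over (nbrs n g i) (fun j =>
    pair_utility beta alpha pi
      (act_toward n g i j (nth i a []))
      (act_toward n g j i (nth j a []))).

(* value of a convergent series (0 if it does not converge) *)
Definition series_value (f : nat -> R) : R :=
  match excluded_middle_informative (exists l, infinite_sum f l) with
  | left H => proj1_sig (constructive_indefinite_description _ H)
  | right _ => 0
  end.

(* K G i m = the set G_i^m of graphs learnt by i at round m when the adversary
   fixes G. *)
Definition Knowledge := EG -> nat -> nat -> Graph -> Prop.

Definition knowledge_wf (Gs : EG -> Prop) (K : Knowledge) : Prop :=
  forall G, Gs G -> forall i m,
    K G i m (G m) /\ (forall g, K G i m g -> forall j, g i j = G m i j).

(* A strategy maps (the graph and) a history to a distribution over actions;
   measurability w.r.t. information sets is imposed in valid_strategy. *)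
Definition Strategy := EG -> Hist -> Action -> R.
Definition Protocol := nat -> Strategy.

Definition obs_equiv (n : nat) (K : Knowledge) (i : nat)
  (G : EG) (p : Hist) (G' : EG) (p' : Hist) : Prop :=
  length p = length p' /\
  (forall k, (k <= length p)%nat -> forall g, K G i k g <-> K G' i k g) /\
  (forall k, (k < length p)%nat ->
     nth i (nth k p []) [] = nth i (nth k p' []) [] /\
     forall j, G k i j = true ->
       act_toward n (G k) j i (nth j (nth k p []) []) =
       act_toward n (G' k) j i (nth j (nth k p' []) [])).

Definition valid_strategy (n : nat) (Gs : EG -> Prop) (K : Knowledge) (i : nat)
  (s : Strategy) : Prop :=
  (forall G p, Gs G -> In p (hist n G (length p)) ->
     (forall a, In a (all_lists (deg n (G (length p)) i)) -> 0 <= s G p a) /\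
     sum_over (all_lists (deg n (G (length p)) i)) (s G p) = 1) /\
  (forall G p G' p', Gs G -> Gs G' ->
     In p (hist n G (length p)) -> In p' (hist n G' (length p')) ->
     obs_equiv n K i G p G' p' -> forall a, s G p a = s G' p' a).

Definition completely_mixed (n : nat) (Gs : EG -> Prop) (K : Knowledge) (i : nat)
  (s : Strategy) : Prop :=
  valid_strategy n Gs K i s /\
  forall G p a, Gs G -> In p (hist n G (length p)) ->
    In a (all_lists (deg n (G (length p)) i)) -> 0 < s G p a.

Definition valid_protocol (n : nat) (Gs : EG -> Prop) (K : Knowledge)
  (sigma : Protocol) : Prop :=
  forall i, (i < n)%nat -> valid_strategy n Gs K i (sigma i).

Definition deviate (sigma : Protocol) (i : nat) (s : Strategy) : Protocol :=
  fun j => if Nat.eqb j i then s else sigma j.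

Fixpoint prob_ext (n : nat) (sigma : Protocol) (G : EG) (p : Hist) (e : Hist) : R :=
  match e with
  | [] => 1
  | a :: e' =>
      prod_over (seq 0 n) (fun i => sigma i G p (nth i a [])) *
      prob_ext n sigma G (p ++ [a]) e'
  end.

Definition prob_hist (n : nat) (sigma : Protocol) (G : EG) (p : Hist) : R :=
  prob_ext n sigma G [] p.

Definition exp_round_utility (n : nat) (beta alpha pi : R) (sigma : Protocol)
  (G : EG) (p : Hist) (i t : nat) : R :=
  sum_over (ext n G (length p) (S t)) (fun e =>
    prob_ext n sigma G p e *
    round_utility n beta alpha pi (G (length p + t)%nat) (last e []) i).

Definition util (n : nat) (beta alpha pi delta : R) (sigma : Protocol)
  (G : EG) (p : Hist) (i : nat) : R :=
  series_value (fun t => delta ^ t * exp_round_utility n beta alpha pi sigma G p i t).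

(* A belief system: mu G i G0 p0 p = mu(h | G, I_i) where I_i is the
   information set of i containing the history (G0, p0), and h = (G, p). *)
Definition Beliefs := EG -> nat -> EG -> Hist -> Hist -> R.

Definition consistent_beliefs (n : nat) (Gs : EG -> Prop) (K : Knowledge)
  (sigma : Protocol) (mu : Beliefs) : Prop :=
  exists sigmac : nat -> Protocol,
    (forall c i, (i < n)%nat -> completely_mixed n Gs K i (sigmac c i)) /\
    (forall i G p a, (i < n)%nat -> Gs G -> In p (hist n G (length p)) ->
       In a (all_lists (deg n (G (length p)) i)) ->
       Un_cv (fun c => sigmac c i G p a) (sigma i G p a)) /\
    (forall G i G0 p0 p, Gs G -> (i < n)%nat -> Gs G0 ->
       In p0 (hist n G0 (length p0)) -> In p (hist n G (length p0)) ->
       obs_equiv n K i G p G0 p0 ->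
       Un_cv (fun c =>
                prob_hist n (sigmac c) G p /
                sum_if (hist n G (length p0)) (fun p' => obs_equiv n K i G p' G0 p0)
                       (prob_hist n (sigmac c) G))
             (mu G i G0 p0 p)).

Definition util_info (n : nat) (K : Knowledge) (beta alpha pi delta : R)
  (mu : Beliefs) (sigma : Protocol) (G : EG) (i : nat) (G0 : EG) (p0 : Hist) : R :=
  sum_if (hist n G (length p0)) (fun p => obs_equiv n K i G p G0 p0)
    (fun p => mu G i G0 p0 p * util n beta alpha pi delta sigma G p i).

Definition OAPE (n : nat) (Gs : EG -> Prop) (K : Knowledge) (beta alpha pi delta : R)
  (sigma : Protocol) : Prop :=
  valid_protocol n Gs K sigma /\
  exists mu, consistent_beliefs n Gs K sigma mu /\
    forall G i s G0 p0, Gs G -> (i < n)%nat -> valid_strategy n Gs K i s ->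
      Gs G0 -> In p0 (hist n G0 (length p0)) ->
      (* the information set of (G0,p0) is compatible with G *)
      (exists p, In p (hist n G (length p0)) /\ obs_equiv n K i G p G0 p0) ->
      util_info n K beta alpha pi delta mu sigma G i G0 p0 >=
      util_info n K beta alpha pi delta mu (deviate sigma i s) G i G0 p0.

Definition all_coop (p : Hist) : Prop :=
  Forall (fun a => Forall (Forall (fun x => x = Coop)) a) p.

Definition enforces_accountability (n : nat) (Gs : EG -> Prop) (K : Knowledge)
  (beta alpha pi delta : R) (sigma : Protocol) : Prop :=
  (forall G p i, Gs G -> In p (hist n G (length p)) -> all_coop p ->
     (i < n)%nat -> sigma i G p (repeat Coop (deg n (G (length p)) i)) = 1) /\
  OAPE n Gs K beta alpha pi delta sigma.

(* Without timely punishments, for every [rho] some agent [i] has an edge [(j, m)] whose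
   punishment opportunities all come at round [m + rho] or later.  On the all-cooperative
   history up to round [m], let [i] defect toward [j] in round [m] and afterwards act as if
   it had not.  Only agents causally reached from [(j, m)] while avoiding [i] can react, and
   none of them meets [i] before round [m + rho]; so [i] saves the cost 1 in round [m], its
   round utilities are unchanged until round [m + rho], and its later losses are at most
   [2 n (|beta| + 1 + |alpha| + |pi|) delta^rho / (1 - delta)], which is below 1 for large
   [rho].  Beliefs consistent with a protocol that cooperates there are certain of the
   all-cooperative history, so the deviation is strictly profitable at that information set. *)

From Stdlib Require Import Reals List Lia Lra Bool Classical ClassicalEpsilon.
Import ListNotations.
Open Scope R_scope.

(** * Finite sums, products and limits *)

Lemma sum_over_nil {A} (f : A -> R) : sum_over [] f = 0.
Proof. reflexivity. Qed.

Lemma sum_over_cons {A} (x : A) l f : sum_over (x :: l) f = f x + sum_over l f.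
Proof. reflexivity. Qed.

Lemma sum_over_app {A} (l1 l2 : list A) f :
  sum_over (l1 ++ l2) f = sum_over l1 f + sum_over l2 f.
Proof.
  induction l1 as [|x l1 IH]; simpl app; rewrite ?sum_over_nil, ?sum_over_cons; [lra|].
  rewrite IH; lra.
Qed.

Lemma sum_over_map {A B} (g : A -> B) l f :
  sum_over (map g l) f = sum_over l (fun x => f (g x)).
Proof. induction l as [|x l IH]; simpl map; rewrite ?sum_over_cons, ?IH; reflexivity. Qed.

Lemma sum_over_flat_map {A B} (g : A -> list B) l f :
  sum_over (flat_map g l) f = sum_over l (fun x => sum_over (g x) f).
Proof.
  induction l as [|x l IH]; simpl flat_map; [reflexivity|].
  rewrite sum_over_app, IH; reflexivity.
Qed.

Lemma sum_over_ext {A} (l : list A) f g :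
  (forall x, In x l -> f x = g x) -> sum_over l f = sum_over l g.
Proof.
  induction l as [|x l IH]; intros H; [reflexivity|].
  rewrite !sum_over_cons, H, IH; [reflexivity| |simpl; auto].
  intros y Hy; apply H; simpl; auto.
Qed.

Lemma sum_over_const0 {A} (l : list A) : sum_over l (fun _ => 0) = 0.
Proof. induction l as [|x l IH]; rewrite ?sum_over_cons, ?IH; simpl; lra. Qed.

Lemma sum_over_scal_l {A} (l : list A) c f :
  sum_over l (fun x => c * f x) = c * sum_over l f.
Proof. induction l as [|x l IH]; rewrite ?sum_over_cons, ?IH; simpl; lra. Qed.

Lemma sum_over_scal_r {A} (l : list A) c f :
  sum_over l (fun x => f x * c) = sum_over l f * c.
Proof. induction l as [|x l IH]; rewrite ?sum_over_cons, ?IH; simpl; lra. Qed.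

Lemma sum_over_plus {A} (l : list A) f g :
  sum_over l (fun x => f x + g x) = sum_over l f + sum_over l g.
Proof. induction l as [|x l IH]; rewrite ?sum_over_cons, ?IH; simpl; lra. Qed.

Lemma sum_over_le {A} (l : list A) f g :
  (forall x, In x l -> f x <= g x) -> sum_over l f <= sum_over l g.
Proof.
  induction l as [|x l IH]; intros H; rewrite ?sum_over_cons; simpl; [lra|].
  assert (f x <= g x) by (apply H; simpl; auto).
  assert (sum_over l f <= sum_over l g) by (apply IH; intros; apply H; simpl; auto).
  lra.
Qed.

Lemma sum_over_nonneg {A} (l : list A) f :
  (forall x, In x l -> 0 <= f x) -> 0 <= sum_over l f.
Proof. intros H. rewrite <- (sum_over_const0 l). apply sum_over_le; auto. Qed.

Lemma sum_over_abs {A} (l : list A) f :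
  Rabs (sum_over l f) <= sum_over l (fun x => Rabs (f x)).
Proof.
  induction l as [|x l IH].
  - rewrite !sum_over_nil, Rabs_R0; lra.
  - rewrite !sum_over_cons. eapply Rle_trans; [apply Rabs_triang|lra].
Qed.

Lemma sum_over_le_const {A} (l : list A) f c :
  (forall x, In x l -> f x <= c) -> sum_over l f <= INR (length l) * c.
Proof.
  intros H. replace (INR (length l) * c) with (sum_over l (fun _ => c)).
  - apply sum_over_le; auto.
  - induction l as [|x l IH]; rewrite ?sum_over_cons; simpl length; [simpl; lra|].
    rewrite S_INR, IH by (intros; apply H; simpl; auto); lra.
Qed.

Lemma sum_over_nonneg_eq0 {A} (l : list A) f :
  (forall x, In x l -> 0 <= f x) -> sum_over l f = 0 -> forall x, In x l -> f x = 0.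
Proof.
  induction l as [|y l IH]; intros H Hs x Hx; [destruct Hx|].
  rewrite sum_over_cons in Hs.
  assert (0 <= f y) by (apply H; simpl; auto).
  assert (0 <= sum_over l f) by (apply sum_over_nonneg; intros; apply H; simpl; auto).
  destruct Hx as [<-|Hx]; [lra|].
  apply IH; auto; [intros; apply H; simpl; auto|lra].
Qed.

Lemma sum_over_point_mass {A} (l : list A) (w g : A -> R) c :
  (forall x, In x l -> 0 <= w x) -> sum_over l w = 1 -> In c l -> w c = 1 ->
  sum_over l (fun x => w x * g x) = g c.
Proof.
  intros Hn Hs Hc Hw. destruct (in_split _ _ Hc) as [l1 [l2 ->]].
  rewrite sum_over_app, sum_over_cons in *.
  assert (Hzero : forall x, In x (l1 ++ l2) -> w x = 0).
  { apply sum_over_nonneg_eq0.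
    - intros x Hx; apply Hn; apply in_app_or in Hx; apply in_or_app; simpl; tauto.
    - rewrite sum_over_app.
      assert (0 <= sum_over l1 w) by (apply sum_over_nonneg; intros; apply Hn, in_or_app; auto).
      assert (0 <= sum_over l2 w)
        by (apply sum_over_nonneg; intros; apply Hn, in_or_app; simpl; auto).
      lra. }
  rewrite (sum_over_ext l1 _ (fun _ => 0)), (sum_over_ext l2 _ (fun _ => 0)), !sum_over_const0.
  - rewrite Hw; lra.
  - intros x Hx; rewrite Hzero by (apply in_or_app; auto); lra.
  - intros x Hx; rewrite Hzero by (apply in_or_app; auto); lra.
Qed.

Lemma sum_over_indicator (l : list nat) j : NoDup l -> In j l ->
  sum_over l (fun x => if Nat.eqb x j then 1 else 0) = 1.
Proof.
  intros Hnd Hj. destruct (in_split _ _ Hj) as [l1 [l2 ->]].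
  apply NoDup_remove_2 in Hnd.
  rewrite sum_over_app, sum_over_cons, Nat.eqb_refl.
  rewrite (sum_over_ext l1 _ (fun _ => 0)), (sum_over_ext l2 _ (fun _ => 0)), !sum_over_const0;
    [lra| |]; intros x Hx; destruct (Nat.eqb_spec x j) as [->|]; auto;
    exfalso; apply Hnd, in_or_app; auto.
Qed.

Lemma sum_over_ge_member {A} (l : list A) f x0 :
  (forall x, In x l -> 0 <= f x) -> In x0 l -> f x0 <= sum_over l f.
Proof.
  intros Hn Hx0. destruct (in_split _ _ Hx0) as [l1 [l2 ->]].
  rewrite sum_over_app, sum_over_cons.
  assert (0 <= sum_over l1 f) by (apply sum_over_nonneg; intros; apply Hn, in_or_app; auto).
  assert (0 <= sum_over l2 f) by (apply sum_over_nonneg; intros; apply Hn, in_or_app; simpl; auto).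
  lra.
Qed.

Lemma prod_over_cons {A} (x : A) l f : prod_over (x :: l) f = f x * prod_over l f.
Proof. reflexivity. Qed.

Lemma prod_over_map {A B} (g : A -> B) l f :
  prod_over (map g l) f = prod_over l (fun x => f (g x)).
Proof. induction l as [|x l IH]; simpl map; rewrite ?prod_over_cons, ?IH; reflexivity. Qed.

Lemma prod_over_nonneg {A} (l : list A) f :
  (forall x, In x l -> 0 <= f x) -> 0 <= prod_over l f.
Proof.
  induction l as [|x l IH]; intros H; rewrite ?prod_over_cons; [simpl; lra|].
  apply Rmult_le_pos; [apply H; simpl|apply IH; intros; apply H; simpl]; auto.
Qed.

Lemma prod_over_pos {A} (l : list A) f :
  (forall x, In x l -> 0 < f x) -> 0 < prod_over l f.
Proof.
  induction l as [|x l IH]; intros H; rewrite ?prod_over_cons; [simpl; lra|].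
  apply Rmult_lt_0_compat; [apply H; simpl|apply IH; intros; apply H; simpl]; auto.
Qed.

Lemma prod_over_eq1 {A} (l : list A) f :
  (forall x, In x l -> f x = 1) -> prod_over l f = 1.
Proof.
  induction l as [|x l IH]; intros H; rewrite ?prod_over_cons; [reflexivity|].
  rewrite H, IH; [lra| |simpl; auto].
  intros y Hy; apply H; simpl; auto.
Qed.

Lemma Un_cv_const c : Un_cv (fun _ => c) c.
Proof. intros eps He. exists 0%nat. intros. unfold Rdist. rewrite Rminus_diag, Rabs_R0. lra. Qed.

Lemma prod_over_cv {A} (l : list A) (f : nat -> A -> R) g :
  (forall x, In x l -> Un_cv (fun c => f c x) (g x)) ->
  Un_cv (fun c => prod_over l (f c)) (prod_over l g).
Proof.
  induction l as [|x l IH]; intros H; [exact (Un_cv_const 1)|].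
  apply CV_mult; [apply H; simpl; auto|apply IH; intros; apply H; simpl; auto].
Qed.

Lemma sum_if_cv {A} (l : list A) (P : A -> Prop) (u : nat -> A -> R) v :
  (forall x, In x l -> P x -> Un_cv (fun c => u c x) (v x)) ->
  Un_cv (fun c => sum_if l P (u c)) (sum_if l P v).
Proof.
  induction l as [|x l IH]; intros H; [exact (Un_cv_const 0)|].
  apply CV_plus.
  - destruct (excluded_middle_informative (P x)); [apply H; simpl; auto|apply Un_cv_const].
  - apply IH. intros; apply H; simpl; auto.
Qed.

Lemma conditional_limit_point_mass {A} (L : list A) (Pr : A -> Prop) (P : nat -> A -> R)
  (mu u : A -> R) x0 :
  In x0 L -> Pr x0 ->
  (forall c x, In x L -> 0 <= P c x) -> (forall c, sum_over L (P c) = 1) ->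
  (forall c, 0 < P c x0) -> Un_cv (fun c => P c x0) 1 ->
  (forall x, In x L -> Pr x -> Un_cv (fun c => P c x / sum_if L Pr (P c)) (mu x)) ->
  sum_if L Pr (fun x => mu x * u x) = u x0.
Proof.
  intros Hx0 HPr0 Hnn Hsum Hpos Hcv1 Hmu.
  set (D := fun c => sum_if L Pr (P c)).
  set (w := fun x => if excluded_middle_informative (Pr x) then mu x else 0).
  assert (HD : forall c, P c x0 <= D c <= 1).
  { intros c. split.
    - set (f := fun x => if excluded_middle_informative (Pr x) then P c x else 0).
      replace (P c x0) with (f x0) by (unfold f; destruct excluded_middle_informative; tauto).
      apply sum_over_ge_member; auto.
      intros x Hx. unfold f. destruct excluded_middle_informative; auto; lra.
    - rewrite <- (Hsum c). apply sum_over_le. intros x Hx.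
      destruct excluded_middle_informative; auto; lra. }
  assert (HDpos : forall c, 0 < D c) by (intros c; specialize (Hpos c); specialize (HD c); lra).
  assert (Hw_nn : forall x, In x L -> 0 <= w x).
  { intros x Hx. unfold w. destruct excluded_middle_informative as [Hp|]; [|lra].
    apply (Rle_cv_lim (Un := fun _ => 0) (Vn := fun c => P c x / D c)); auto using Un_cv_const.
    intros c. apply Rle_mult_inv_pos; auto. }
  assert (Hw_sum : sum_over L w = 1).
  { apply (UL_sequence (fun c => sum_if L Pr (fun x => P c x / D c))).
    - apply sum_if_cv; auto.
    - eapply Un_cv_ext; [|apply Un_cv_const]. intros c. unfold sum_if.
      rewrite (sum_over_ext _ _ (fun x => (if excluded_middle_informative (Pr x) then P c x else 0)
                                          * / D c)), sum_over_scal_r.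
      + symmetry. apply Rinv_r. specialize (HDpos c). lra.
      + intros x _. destruct excluded_middle_informative; unfold Rdiv; lra. }
  assert (Hw0 : w x0 = 1).
  { unfold w. destruct excluded_middle_informative; [|contradiction].
    apply Rle_antisym.
    - apply (Rle_cv_lim (Un := fun c => P c x0 / D c) (Vn := fun _ => 1)); auto using Un_cv_const.
      intros c. specialize (HD c). specialize (HDpos c). apply Rmult_le_reg_r with (D c); [lra|].
      unfold Rdiv. rewrite Rmult_assoc, Rinv_l by lra. lra.
    - apply (Rle_cv_lim (Un := fun c => P c x0) (Vn := fun c => P c x0 / D c)); auto.
      intros c. specialize (HD c). specialize (HDpos c). specialize (Hpos c).
      apply Rmult_le_reg_r with (D c); [lra|].
      unfold Rdiv. rewrite Rmult_assoc, Rinv_l by lra. nra. }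
  unfold sum_if. rewrite (sum_over_ext _ _ (fun x => w x * u x)).
  - apply sum_over_point_mass; auto.
  - intros x _. unfold w. destruct excluded_middle_informative; lra.
Qed.

Lemma nth_map_seq {A} (f : nat -> A) len t d :
  (t < len)%nat -> nth t (map f (seq 0 len)) d = f t.
Proof.
  intros H. rewrite nth_indep with (d' := f 0%nat) by (rewrite length_map, length_seq; auto).
  rewrite map_nth, seq_nth; auto.
Qed.

Lemma last_nth {A} (e : list A) t d : length e = S t -> last e d = nth t e d.
Proof.
  revert t; induction e as [|x [|y e] IH]; intros t H; simpl in *; try lia.
  - replace t with 0%nat by lia; reflexivity.
  - destruct t; [lia|]. apply (IH t). simpl in *; lia.
Qed.

Lemma in_all_lists d x : In x (all_lists d) <-> length x = d.
Proof.
  revert x; induction d as [|d IH]; intros x; cbn [all_lists].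
  - split; [intros [<-|[]]; auto|destruct x; simpl; [auto|discriminate]].
  - rewrite in_flat_map. split.
    + intros [a [_ Ha]]. apply in_map_iff in Ha. destruct Ha as [y [<- Hy]].
      simpl; f_equal; apply IH; auto.
    + destruct x as [|a x]; simpl; intros H; [discriminate|]. injection H as H.
      exists a; split; [destruct a; simpl; auto|apply in_map, IH; auto].
Qed.

Lemma in_profiles_of ds a : In a (profiles_of ds) <->
  length a = length ds /\
  forall o, (o < length ds)%nat -> length (nth o a []) = nth o ds 0%nat.
Proof.
  revert a; induction ds as [|d ds IH]; intros a; cbn [profiles_of].
  - split; [intros [<-|[]]; split; auto; simpl; lia|].
    intros [H _]; destruct a; [simpl; auto|discriminate].
  - rewrite in_flat_map. split.
    + intros [x [Hx Ha]]. apply in_map_iff in Ha. destruct Ha as [y [<- Hy]].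
      apply IH in Hy. destruct Hy as [H1 H2]. apply in_all_lists in Hx.
      split; [simpl; auto|]. intros [|o] Ho; simpl; auto. apply H2; simpl in Ho; lia.
    + destruct a as [|x a]; simpl; intros [H1 H2]; [discriminate|].
      exists x; split; [apply in_all_lists, (H2 0%nat); lia|].
      apply in_map, IH. split; [lia|]. intros o Ho. apply (H2 (S o)); lia.
Qed.

Definition fits (n : nat) (g : Graph) (a : Profile) : Prop :=
  length a = n /\ forall o, (o < n)%nat -> length (nth o a []) = deg n g o.

Lemma in_round_profiles n G k a : In a (round_profiles n G k) <-> fits n (G k) a.
Proof.
  unfold round_profiles, fits. rewrite in_profiles_of, length_map, length_seq.
  split; intros [H1 H2]; split; auto; intros o Ho; rewrite H2, ?nth_map_seq; auto.
Qed.

Lemma in_ext n G r : forall k e, In e (ext n G k r) <->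
  length e = r /\ forall t, (t < r)%nat -> fits n (G (k + t)%nat) (nth t e []).
Proof.
  induction r as [|r IH]; intros k e; cbn [ext].
  - split; [intros [<-|[]]; split; auto; simpl; lia|].
    intros [H _]; destruct e; [simpl; auto|discriminate].
  - rewrite in_flat_map. split.
    + intros [a [Ha He]]. apply in_map_iff in He. destruct He as [e' [<- He']].
      apply IH in He'. destruct He' as [H1 H2]. apply in_round_profiles in Ha.
      split; [simpl; auto|]. intros [|t] Ht; simpl; [rewrite Nat.add_0_r; auto|].
      replace (k + S t)%nat with (S k + t)%nat by lia. apply H2; lia.
    + destruct e as [|a e]; simpl; intros [H1 H2]; [discriminate|].
      exists a; split.
      * apply in_round_profiles. rewrite <- (Nat.add_0_r k). apply (H2 0%nat); lia.
      * apply in_map, IH. split; [lia|]. intros t Ht.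
        replace (S k + t)%nat with (k + S t)%nat by lia. apply (H2 (S t)); lia.
Qed.

Lemma in_hist n G m p : In p (hist n G m) <->
  length p = m /\ forall t, (t < m)%nat -> fits n (G t) (nth t p []).
Proof. apply in_ext. Qed.

Lemma hist_snoc n G (q : Hist) a :
  In q (hist n G (length q)) -> In a (round_profiles n G (length q)) ->
  In (q ++ [a]) (hist n G (length (q ++ [a]))).
Proof.
  rewrite !in_hist, in_round_profiles. intros [_ Hq] Ha. rewrite length_app, Nat.add_1_r.
  split; auto. intros t Ht. destruct (Nat.lt_ge_cases t (length q)).
  - rewrite app_nth1; auto.
  - replace t with (length q) by lia. rewrite app_nth2, Nat.sub_diag; auto.
Qed.

Lemma sum_over_ext_succ n G k r (F : Hist -> R) :
  sum_over (ext n G k (S r)) F =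
  sum_over (round_profiles n G k) (fun a => sum_over (ext n G (S k) r) (fun e => F (a :: e))).
Proof.
  cbn [ext]. rewrite sum_over_flat_map. apply sum_over_ext. intros a _.
  apply sum_over_map.
Qed.

Lemma sum_prob_ext_succ n tau G k r (q : Hist) (F : Hist -> R) :
  sum_over (ext n G k (S r)) (fun e => prob_ext n tau G q e * F e) =
  sum_over (round_profiles n G k) (fun a =>
    prod_over (seq 0 n) (fun o => tau o G q (nth o a [])) *
    sum_over (ext n G (S k) r) (fun e => prob_ext n tau G (q ++ [a]) e * F (a :: e))).
Proof.
  rewrite sum_over_ext_succ. apply sum_over_ext. intros a _.
  rewrite <- sum_over_scal_l. apply sum_over_ext. intros e _. apply Rmult_assoc.
Qed.

Lemma prod_over_seq_succ (P : nat -> Action -> R) L x r :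
  prod_over (seq 0 (S L)) (fun o => P o (nth o (x :: r) [])) =
  P 0%nat x * prod_over (seq 0 L) (fun o => P (S o) (nth o r [])).
Proof.
  rewrite <- cons_seq, prod_over_cons, <- seq_shift, prod_over_map. reflexivity.
Qed.

Lemma sum_product_distribution ds (P : nat -> Action -> R) :
  (forall o, (o < length ds)%nat -> sum_over (all_lists (nth o ds 0%nat)) (P o) = 1) ->
  sum_over (profiles_of ds)
    (fun a => prod_over (seq 0 (length ds)) (fun o => P o (nth o a []))) = 1.
Proof.
  revert P; induction ds as [|d ds IH]; intros P HP; [cbn; lra|].
  cbn [profiles_of length]. rewrite sum_over_flat_map.
  rewrite (sum_over_ext _ _ (fun x => P 0%nat x * 1)).
  - rewrite sum_over_scal_r, Rmult_1_r. apply (HP 0%nat); simpl; lia.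
  - intros x _. rewrite sum_over_map.
    erewrite sum_over_ext by (intros r _; apply prod_over_seq_succ).
    rewrite sum_over_scal_l. f_equal. apply (IH (fun o => P (S o))).
    intros o Ho. apply (HP (S o)). simpl; lia.
Qed.

Lemma in_profiles_of_cons d ds x a :
  In x (all_lists d) -> In a (profiles_of ds) -> In (x :: a) (profiles_of (d :: ds)).
Proof.
  intros Hx Ha. cbn [profiles_of]. apply in_flat_map. exists x. split; auto. apply in_map; auto.
Qed.

Lemma sum_profiles_of_cons d ds (P : nat -> Action -> R) (H : Profile -> R) :
  sum_over (profiles_of (d :: ds))
    (fun a => prod_over (seq 0 (S (length ds))) (fun o => P o (nth o a [])) * H a) =
  sum_over (all_lists d) (fun x => P 0%nat x *
    sum_over (profiles_of ds)
      (fun r => prod_over (seq 0 (length ds)) (fun o => P (S o) (nth o r [])) * H (x :: r))).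
Proof.
  cbn [profiles_of]. rewrite sum_over_flat_map. apply sum_over_ext. intros x _.
  rewrite sum_over_map, <- sum_over_scal_l. apply sum_over_ext. intros r _.
  rewrite prod_over_seq_succ. apply Rmult_assoc.
Qed.

(* A one-round coupling: the good coordinates are reindexed by the involutions [phi o],
   the other ones integrate out to 1. *)
Lemma sum_product_coupling ds : forall (P P' : nat -> Action -> R) (good : nat -> Prop)
  (phi : nat -> Action -> Action) (H H' : Profile -> R),
  (forall o x, (o < length ds)%nat -> good o -> In x (all_lists (nth o ds 0%nat)) ->
     P' o x = P o (phi o x)) ->
  (forall o x, (o < length ds)%nat -> good o -> In x (all_lists (nth o ds 0%nat)) ->
     In (phi o x) (all_lists (nth o ds 0%nat)) /\ phi o (phi o x) = x) ->
  (forall o f, (o < length ds)%nat -> good o ->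
     sum_over (all_lists (nth o ds 0%nat)) (fun x => f (phi o x)) =
     sum_over (all_lists (nth o ds 0%nat)) f) ->
  (forall o, (o < length ds)%nat -> ~ good o ->
     sum_over (all_lists (nth o ds 0%nat)) (P o) = 1 /\
     sum_over (all_lists (nth o ds 0%nat)) (P' o) = 1) ->
  (forall a a', In a (profiles_of ds) -> In a' (profiles_of ds) ->
     (forall o, (o < length ds)%nat -> good o -> nth o a [] = phi o (nth o a' [])) ->
     H a = H' a') ->
  sum_over (profiles_of ds)
    (fun a => prod_over (seq 0 (length ds)) (fun o => P o (nth o a [])) * H a) =
  sum_over (profiles_of ds)
    (fun a => prod_over (seq 0 (length ds)) (fun o => P' o (nth o a [])) * H' a).
Proof.
  induction ds as [|d ds IH]; intros P P' good phi H H' HP Hphi Hsum Hbad HH.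
  { cbn. rewrite (HH [] []); simpl; auto; lia. }
  cbn [length]. rewrite !sum_profiles_of_cons.
  set (S0 := fun x => sum_over (profiles_of ds) (fun r =>
    prod_over (seq 0 (length ds)) (fun o => P (S o) (nth o r [])) * H (x :: r))).
  set (S1 := fun y => sum_over (profiles_of ds) (fun r =>
    prod_over (seq 0 (length ds)) (fun o => P' (S o) (nth o r [])) * H' (y :: r))).
  assert (Htail : forall x y, In x (all_lists d) -> In y (all_lists d) ->
            (good 0%nat -> x = phi 0%nat y) -> S0 x = S1 y).
  { intros x y Hx Hy Hxy. unfold S0, S1.
    apply (IH (fun o => P (S o)) (fun o => P' (S o)) (fun o => good (S o)) (fun o => phi (S o))).
    - intros o z Ho; apply (HP (S o)); simpl in *; lia.
    - intros o z Ho; apply (Hphi (S o)); simpl in *; lia.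
    - intros o f Ho; apply (Hsum (S o)); simpl in *; lia.
    - intros o Ho; apply (Hbad (S o)); simpl in *; lia.
    - intros a a' Ha Ha' Hg. apply HH; auto using in_profiles_of_cons.
      intros [|o] Ho Hgo; simpl; auto. apply Hg; auto. simpl in Ho; lia. }
  change (sum_over (all_lists d) (fun x => P 0%nat x * S0 x) =
          sum_over (all_lists d) (fun x => P' 0%nat x * S1 x)).
  destruct (classic (good 0%nat)) as [G0|G0].
  - pose proof (Hsum 0%nat (fun y => P' 0%nat y * S1 y) ltac:(simpl; lia) G0) as Hre.
    simpl nth in Hre. rewrite <- Hre.
    apply sum_over_ext. intros x Hx.
    destruct (Hphi 0%nat x ltac:(simpl; lia) G0 Hx) as [Hpx Hpp].
    rewrite (HP 0%nat (phi 0%nat x)), Hpp by (simpl; auto; lia).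
    f_equal. apply Htail; auto.
  - destruct (Hbad 0%nat ltac:(simpl; lia) G0) as [B1 B2]. simpl nth in B1, B2.
    set (y0 := repeat Defect d).
    assert (Hy0 : In y0 (all_lists d)) by (apply in_all_lists, repeat_length).
    rewrite (sum_over_ext _ (fun x => P 0%nat x * S0 x) (fun x => P 0%nat x * S1 y0)),
            (sum_over_ext _ (fun x => P' 0%nat x * S1 x) (fun x => P' 0%nat x * S1 y0)).
    + rewrite !sum_over_scal_r, B1, B2. reflexivity.
    + intros x Hx. f_equal. transitivity (S0 y0); [symmetry|]; apply Htail; auto; tauto.
    + intros x Hx. f_equal. apply Htail; auto; tauto.
Qed.

Lemma length_degrees n (g : Graph) : length (map (fun o => deg n g o) (seq 0 n)) = n.
Proof. rewrite length_map, length_seq; reflexivity. Qed.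

Lemma nth_degrees n (g : Graph) o :
  (o < n)%nat -> nth o (map (fun o => deg n g o) (seq 0 n)) 0%nat = deg n g o.
Proof. apply nth_map_seq. Qed.

Lemma sum_round_distribution n G k (P : nat -> Action -> R) :
  (forall o, (o < n)%nat -> sum_over (all_lists (deg n (G k) o)) (P o) = 1) ->
  sum_over (round_profiles n G k) (fun a => prod_over (seq 0 n) (fun o => P o (nth o a []))) = 1.
Proof.
  intros HP. pose proof (sum_product_distribution (map (fun o => deg n (G k) o) (seq 0 n)) P)
    as Hdist.
  rewrite length_degrees in Hdist. apply Hdist.
  intros o Ho. rewrite nth_degrees; auto.
Qed.

Lemma sum_round_coupling n G k (P P' : nat -> Action -> R) (good : nat -> Prop)
  (phi : nat -> Action -> Action) (H H' : Profile -> R) :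
  (forall o x, (o < n)%nat -> good o -> In x (all_lists (deg n (G k) o)) ->
     P' o x = P o (phi o x)) ->
  (forall o x, (o < n)%nat -> good o -> In x (all_lists (deg n (G k) o)) ->
     In (phi o x) (all_lists (deg n (G k) o)) /\ phi o (phi o x) = x) ->
  (forall o f, (o < n)%nat -> good o ->
     sum_over (all_lists (deg n (G k) o)) (fun x => f (phi o x)) =
     sum_over (all_lists (deg n (G k) o)) f) ->
  (forall o, (o < n)%nat -> ~ good o ->
     sum_over (all_lists (deg n (G k) o)) (P o) = 1 /\
     sum_over (all_lists (deg n (G k) o)) (P' o) = 1) ->
  (forall a a', In a (round_profiles n G k) -> In a' (round_profiles n G k) ->
     (forall o, (o < n)%nat -> good o -> nth o a [] = phi o (nth o a' [])) -> H a = H' a') ->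
  sum_over (round_profiles n G k)
    (fun a => prod_over (seq 0 n) (fun o => P o (nth o a [])) * H a) =
  sum_over (round_profiles n G k)
    (fun a => prod_over (seq 0 n) (fun o => P' o (nth o a [])) * H' a).
Proof.
  intros HP Hphi Hsum Hbad HH.
  pose proof (sum_product_coupling (map (fun o => deg n (G k) o) (seq 0 n)) P P' good phi H H')
    as Hcoup.
  rewrite length_degrees in Hcoup. apply Hcoup; auto;
    intros o; intros; rewrite ?nth_degrees in *; auto.
Qed.

(** * Flipping one individual action *)

Fixpoint map_at {A} (k : nat) (f : A -> A) (l : list A) : list A :=
  match k, l with
  | O, x :: r => f x :: r
  | S k, x :: r => x :: map_at k f r
  | _, [] => []
  end.

Lemma length_map_at {A} k (f : A -> A) l : length (map_at k f l) = length l.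
Proof. revert l; induction k; destruct l; simpl; auto. Qed.

Lemma nth_map_at_eq {A} k (f : A -> A) l d :
  (k < length l)%nat -> nth k (map_at k f l) d = f (nth k l d).
Proof. revert l; induction k; destruct l; simpl; intros; try lia; auto. apply IHk; lia. Qed.

Lemma nth_map_at_neq {A} k k' (f : A -> A) l d :
  k' <> k -> nth k' (map_at k f l) d = nth k' l d.
Proof. revert l k'; induction k; destruct l, k'; simpl; intros; auto; lia. Qed.

Lemma map_at_overflow {A} k (f : A -> A) l : (length l <= k)%nat -> map_at k f l = l.
Proof. revert l; induction k; destruct l; simpl; intros; auto; try lia. rewrite IHk; auto; lia. Qed.

Lemma map_at_involutive {A} k (f : A -> A) l :
  (forall x, f (f x) = x) -> map_at k f (map_at k f l) = l.
Proof. revert l; induction k; destruct l; simpl; intros; rewrite ?H, ?IHk; auto. Qed.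

Definition flip (x : IAct) : IAct :=
  match x with Defect => Coop | Coop => Defect | Punish => Punish end.

Lemma flip_involutive x : flip (flip x) = x.
Proof. destruct x; reflexivity. Qed.

Lemma sum_all_lists_flip_at d : forall k (f : Action -> R),
  sum_over (all_lists d) (fun x => f (map_at k flip x)) = sum_over (all_lists d) f.
Proof.
  induction d as [|d IH]; intros k f; [destruct k; reflexivity|].
  cbn [all_lists]. rewrite !sum_over_flat_map. destruct k as [|k].
  - rewrite !sum_over_cons, !sum_over_map. cbn [map_at flip]. rewrite !sum_over_nil. lra.
  - apply sum_over_ext. intros y _. rewrite !sum_over_map.
    apply (IH k (fun r => f (y :: r))).
Qed.

Lemma index_of_inj (L : list nat) l j : In j L -> index_of l L = index_of j L -> l = j.
Proof.
  induction L as [|x L IH]; simpl; intros Hj H; [destruct Hj|].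
  destruct (Nat.eqb_spec x l), (Nat.eqb_spec x j); try congruence.
  apply IH; [destruct Hj; [congruence|auto]|congruence].
Qed.

Lemma index_of_lt (L : list nat) j : In j L -> (index_of j L < length L)%nat.
Proof.
  induction L as [|x L IH]; simpl; intros Hj; [destruct Hj|].
  destruct (Nat.eqb_spec x j); [lia|]. destruct Hj; [congruence|]. specialize (IH H); lia.
Qed.

Lemma in_nbrs n g i l : In l (nbrs n g i) <-> (l < n)%nat /\ g i l = true.
Proof. unfold nbrs. rewrite filter_In, in_seq. split; intros [A B]; split; auto; lia. Qed.

Lemma deg_le n g i : (deg n g i <= n)%nat.
Proof. unfold deg, nbrs. rewrite <- (length_seq n 0) at 2. apply filter_length_le. Qed.

Lemma nbrs_NoDup n g i : NoDup (nbrs n g i).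
Proof. apply NoDup_filter, seq_NoDup. Qed.

Lemma nbrs_ext n g g' i : (forall x, g i x = g' i x) -> nbrs n g i = nbrs n g' i.
Proof. intros H. apply filter_ext. auto. Qed.

Definition flip_toward (n i j : nat) (g : Graph) (x : Action) : Action :=
  if g i j then map_at (index_of j (nbrs n g i)) flip x else x.

Lemma length_flip_toward n i j g x : length (flip_toward n i j g x) = length x.
Proof. unfold flip_toward. destruct (g i j); auto using length_map_at. Qed.

Lemma flip_toward_involutive n i j g x : flip_toward n i j g (flip_toward n i j g x) = x.
Proof.
  unfold flip_toward. destruct (g i j); auto. apply map_at_involutive, flip_involutive.
Qed.

Lemma in_all_lists_flip_toward n i j g d x :
  In x (all_lists d) -> In (flip_toward n i j g x) (all_lists d).
Proof. rewrite !in_all_lists, length_flip_toward. auto. Qed.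

Lemma sum_all_lists_flip_toward n i j g d f :
  sum_over (all_lists d) (fun x => f (flip_toward n i j g x)) = sum_over (all_lists d) f.
Proof. unfold flip_toward. destruct (g i j); auto using sum_all_lists_flip_at. Qed.

Lemma flip_toward_ext n i j g g' x :
  (forall y, g i y = g' i y) -> flip_toward n i j g x = flip_toward n i j g' x.
Proof. intros H. unfold flip_toward. rewrite (nbrs_ext n g g' i H), H. reflexivity. Qed.

Lemma act_toward_flip_toward_neq n i j g l x : (j < n)%nat -> l <> j ->
  act_toward n g i l (flip_toward n i j g x) = act_toward n g i l x.
Proof.
  intros Hj Hl. unfold act_toward, flip_toward. destruct (g i j) eqn:E; auto.
  apply nth_map_at_neq. intros Heq. apply Hl.
  apply index_of_inj with (nbrs n g i); auto. apply in_nbrs; auto.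
Qed.

Lemma act_toward_flip_toward_eq n i j g x :
  (j < n)%nat -> g i j = true -> length x = deg n g i ->
  act_toward n g i j (flip_toward n i j g x) = flip (act_toward n g i j x).
Proof.
  intros Hj E Hx. unfold act_toward, flip_toward. rewrite E. apply nth_map_at_eq.
  rewrite Hx. apply index_of_lt, in_nbrs; auto.
Qed.

Definition flip_in_hist (n i j m : nat) (G : EG) (p : Hist) : Hist :=
  map_at m (map_at i (flip_toward n i j (G m))) p.

Lemma length_flip_in_hist n i j m G p : length (flip_in_hist n i j m G p) = length p.
Proof. apply length_map_at. Qed.

Lemma flip_in_hist_short n i j m G (p : Hist) :
  (length p <= m)%nat -> flip_in_hist n i j m G p = p.
Proof. apply map_at_overflow. Qed.

Lemma nth_flip_in_hist_other_round n i j m G (p : Hist) k o : k <> m ->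
  nth o (nth k (flip_in_hist n i j m G p) []) [] = nth o (nth k p []) [].
Proof. intros H. unfold flip_in_hist. rewrite nth_map_at_neq; auto. Qed.

Lemma nth_flip_in_hist_other_agent n i j m G (p : Hist) k o : o <> i ->
  nth o (nth k (flip_in_hist n i j m G p) []) [] = nth o (nth k p []) [].
Proof.
  intros H. destruct (Nat.eq_dec k m) as [->|]; [|apply nth_flip_in_hist_other_round; auto].
  unfold flip_in_hist. destruct (Nat.lt_ge_cases m (length p)).
  - rewrite nth_map_at_eq, nth_map_at_neq; auto.
  - rewrite !(nth_overflow (map_at _ _ p)), !(nth_overflow p); rewrite ?length_map_at; auto.
Qed.

Lemma nth_flip_in_hist_eq n i j m G (p : Hist) :
  (m < length p)%nat -> (i < length (nth m p []))%nat ->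
  nth i (nth m (flip_in_hist n i j m G p) []) [] = flip_toward n i j (G m) (nth i (nth m p []) []).
Proof. intros H1 H2. unfold flip_in_hist. rewrite !nth_map_at_eq; auto. Qed.

Lemma flip_in_hist_hist n i j m G p :
  In p (hist n G (length p)) -> In (flip_in_hist n i j m G p) (hist n G (length p)).
Proof.
  rewrite !in_hist. intros [_ H]. split; [apply length_flip_in_hist|]. intros t Ht.
  destruct (H t Ht) as [H1 H2]. split.
  - unfold flip_in_hist. destruct (Nat.eq_dec t m) as [->|].
    + rewrite nth_map_at_eq, length_map_at; auto.
    + rewrite nth_map_at_neq; auto.
  - intros o Ho. destruct (Nat.eq_dec t m) as [->|]; [destruct (Nat.eq_dec o i) as [->|]|].
    + rewrite nth_flip_in_hist_eq, length_flip_toward; auto. rewrite H1; lia.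
    + rewrite nth_flip_in_hist_other_agent; auto.
    + rewrite nth_flip_in_hist_other_round; auto.
Qed.

(* [i] flips its individual action toward [j] in round [m] and afterwards acts as if it had
   not, so that only agents reached from [(j, m)] can notice. *)
Definition deviation (n i j m : nat) (sigma : Protocol) : Strategy := fun G p a =>
  if Nat.ltb (length p) m then sigma i G p a
  else if Nat.eqb (length p) m then sigma i G p (flip_toward n i j (G m) a)
  else sigma i G (flip_in_hist n i j m G p) a.

Lemma chain_avoid_later G i steps : forall o lo l m1 m2,
  chain_avoid G i o lo steps l m1 -> (m1 <= m2)%nat -> chain_avoid G i o lo steps l m2.
Proof.
  induction steps as [|[o' mt] rest IH]; simpl; intros o lo l m1 m2 H Hm; auto.
  destruct H as [A [B [C [D E]]]]. repeat split; eauto. lia.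
Qed.

Lemma chain_avoid_snoc G i steps : forall o lo l m1 o' m2,
  chain_avoid G i o lo steps l m1 -> (lo <= m1)%nat -> l <> i -> G m1 l o' = true ->
  (m1 < m2)%nat -> chain_avoid G i o lo (steps ++ [(o', m1)]) o' m2.
Proof.
  induction steps as [|[o1 mt] rest IH]; simpl; intros o lo l m1 o' m2 H Hlo Hl He Hm.
  - subst. repeat split; auto.
  - destruct H as [A [B [C [D E]]]]. repeat split; eauto. lia.
Qed.

Lemma influences_avoiding_later G i j m o k k' :
  influences_avoiding G i j m o k -> (k <= k')%nat -> influences_avoiding G i j m o k'.
Proof. intros [H1 [st H2]] Hk. split; [lia|]. exists st. eapply chain_avoid_later; eauto. Qed.

Lemma influences_avoiding_step G i j m q o k' k :
  influences_avoiding G i j m q k' -> q <> i -> G k' q o = true -> (k' < k)%nat ->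
  influences_avoiding G i j m o k.
Proof.
  intros [H1 [st H2]] Hq He Hk. split; [lia|].
  exists (st ++ [(o, k')]). eapply chain_avoid_snoc; eauto. lia.
Qed.

Lemma influences_avoiding_self G i j m k : (m < k)%nat -> influences_avoiding G i j m j k.
Proof. intros H. split; [auto|]. exists []. reflexivity. Qed.

Lemma exists_late_punishment_edge (Gs : EG -> Prop) rho :
  ~ restricted_by_timely_punishments Gs -> (0 < rho)%nat ->
  exists G i j m, Gs G /\ G m i j = true /\
    forall l m', punishment_opportunity G i j m l m' -> (m + rho <= m')%nat.
Proof.
  intros Hnot Hrho. apply NNPP. intros Hno. apply Hnot. exists rho. split; auto.
  intros G HG i j m Hij. apply NNPP. intros Hnpo. apply Hno. exists G, i, j, m.
  repeat split; auto. intros l m' Hpo. apply Nat.nlt_ge. intros Hlt. apply Hnpo. eauto.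
Qed.

Definition utility_bound (beta alpha pi : R) : R := Rabs beta + 1 + Rabs alpha + Rabs pi.

Lemma utility_bound_nonneg beta alpha pi : 0 <= utility_bound beta alpha pi.
Proof.
  unfold utility_bound. pose proof (Rabs_pos beta); pose proof (Rabs_pos alpha);
  pose proof (Rabs_pos pi); lra.
Qed.

Lemma pair_utility_abs_le beta alpha pi x y :
  Rabs (pair_utility beta alpha pi x y) <= utility_bound beta alpha pi.
Proof.
  unfold pair_utility, utility_bound.
  pose proof (Rabs_pos beta); pose proof (Rabs_pos alpha); pose proof (Rabs_pos pi).
  pose proof (Rle_abs beta); pose proof (Rle_abs alpha); pose proof (Rle_abs pi).
  pose proof (Rle_abs (- beta)); pose proof (Rle_abs (- alpha)); pose proof (Rle_abs (- pi)).
  rewrite !Rabs_Ropp in *. apply Rabs_le. destruct x, y; simpl; lra.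
Qed.

Lemma round_utility_abs_le n beta alpha pi g a i :
  Rabs (round_utility n beta alpha pi g a i) <= INR n * utility_bound beta alpha pi.
Proof.
  unfold round_utility. eapply Rle_trans; [apply sum_over_abs|].
  eapply Rle_trans; [apply sum_over_le_const; intros; apply pair_utility_abs_le|].
  apply Rmult_le_compat_r; [apply utility_bound_nonneg|apply le_INR, deg_le].
Qed.

Definition coop_action (n : nat) (g : Graph) (o : nat) : Action := repeat Coop (deg n g o).

Definition coop_profile (n : nat) (g : Graph) : Profile := map (coop_action n g) (seq 0 n).

Definition coop_hist (n : nat) (G : EG) (m : nat) : Hist :=
  map (fun k => coop_profile n (G k)) (seq 0 m).

Definition flipped_profile (n i j : nat) (g : Graph) : Profile :=
  map (fun o => if Nat.eqb o i then flip_toward n i j g (coop_action n g i) else coop_action n g o)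
      (seq 0 n).

Lemma coop_profile_fits n g : fits n g (coop_profile n g).
Proof.
  unfold coop_profile. split; [rewrite length_map, length_seq; auto|].
  intros o Ho. rewrite nth_map_seq by auto. apply repeat_length.
Qed.

Lemma flipped_profile_fits n i j g : fits n g (flipped_profile n i j g).
Proof.
  unfold flipped_profile. split; [rewrite length_map, length_seq; auto|].
  intros o Ho. rewrite nth_map_seq by auto.
  destruct (Nat.eqb_spec o i) as [->|]; rewrite ?length_flip_toward; apply repeat_length.
Qed.

Lemma length_coop_hist n G m : length (coop_hist n G m) = m.
Proof. unfold coop_hist. rewrite length_map, length_seq; auto. Qed.

Lemma coop_hist_hist n G m : In (coop_hist n G m) (hist n G (length (coop_hist n G m))).
Proof.
  rewrite length_coop_hist. apply in_hist. split; [apply length_coop_hist|].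
  intros t Ht. unfold coop_hist. rewrite nth_map_seq by auto. apply coop_profile_fits.
Qed.

Lemma all_coop_coop_hist n G m : all_coop (coop_hist n G m).
Proof.
  unfold all_coop, coop_hist, coop_profile. apply Forall_forall. intros x Hx.
  apply in_map_iff in Hx. destruct Hx as [k [<- _]]. apply Forall_forall. intros y Hy.
  apply in_map_iff in Hy. destruct Hy as [o [<- _]].
  apply Forall_forall. intros z Hz. apply repeat_spec in Hz; auto.
Qed.

Lemma all_coop_action (x : Action) : Forall (fun y => y = Coop) x -> x = repeat Coop (length x).
Proof. induction 1; simpl; f_equal; auto. Qed.

Lemma round_utility_flipped_profile n beta alpha pi i j (g : Graph) :
  wf_graph n g -> g i j = true ->
  round_utility n beta alpha pi g (flipped_profile n i j g) i =
  round_utility n beta alpha pi g (coop_profile n g) i + 1.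
Proof.
  intros [Hsym [Hirr Hin]] Hij. destruct (Hin i j Hij) as [Hi Hj]. unfold round_utility.
  rewrite <- (sum_over_indicator (nbrs n g i) j) by (apply nbrs_NoDup || apply in_nbrs; auto).
  rewrite <- sum_over_plus. apply sum_over_ext.
  intros l Hl. apply in_nbrs in Hl. destruct Hl as [Hl Hgl].
  assert (Hli : l <> i) by (intros ->; congruence).
  unfold flipped_profile, coop_profile. rewrite !nth_map_seq, Nat.eqb_refl by auto.
  apply Nat.eqb_neq in Hli. rewrite Hli.
  destruct (Nat.eqb_spec l j) as [->|].
  - rewrite act_toward_flip_toward_eq; auto; [|apply repeat_length].
    unfold act_toward at 1 3, coop_action. rewrite nth_repeat_lt.
    + unfold pair_utility. simpl. ring.
    + apply index_of_lt, in_nbrs; auto.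
  - rewrite act_toward_flip_toward_neq; auto. ring.
Qed.

(** * Discounted series *)

Lemma Rabs_le_between x b : Rabs x <= b -> - b <= x <= b.
Proof. pose proof (Rle_abs x). pose proof (Rle_abs (- x)). rewrite Rabs_Ropp in *. lra. Qed.

Lemma infinite_sum_Un_cv f l : infinite_sum f l <-> Un_cv (sum_f_R0 f) l.
Proof. reflexivity. Qed.

Lemma series_value_eq f l : infinite_sum f l -> series_value f = l.
Proof.
  intros H. unfold series_value. destruct excluded_middle_informative as [E|E].
  - destruct (constructive_indefinite_description _ E) as [l' Hl']. eapply uniqueness_sum; eauto.
  - exfalso; eauto.
Qed.

Lemma infinite_sum_ext f g l : (forall t, f t = g t) -> infinite_sum f l -> infinite_sum g l.
Proof.
  rewrite !infinite_sum_Un_cv. intros Hfg. apply Un_cv_ext. intros N. apply sum_eq; auto.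
Qed.

Lemma infinite_sum_minus f g a b :
  infinite_sum f a -> infinite_sum g b -> infinite_sum (fun t => f t - g t) (a - b).
Proof.
  rewrite !infinite_sum_Un_cv. intros Hf Hg.
  apply (Un_cv_ext (fun N => sum_f_R0 f N - sum_f_R0 g N)); [intros N; symmetry; apply minus_sum|].
  apply CV_minus; auto.
Qed.

Lemma infinite_sum_geometric B d : 0 <= d < 1 ->
  infinite_sum (fun t => B * d ^ t) (B * / (1 - d)).
Proof.
  intros Hd. pose proof (GP_infinite d ltac:(rewrite Rabs_right; lra)) as Hg.
  apply infinite_sum_Un_cv. apply (Un_cv_ext (fun N => B * sum_f_R0 (fun t => 1 * d ^ t) N)).
  - intros N. rewrite scal_sum. apply sum_eq. intros t _. ring.
  - apply CV_mult; [apply Un_cv_const|exact Hg].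
Qed.

Lemma summable_of_geometric_bound f B d : 0 <= d < 1 ->
  (forall t, Rabs (f t) <= B * d ^ t) -> exists l, infinite_sum f l.
Proof.
  intros Hd Hf.
  destruct (Rseries_CV_comp (fun t => f t + B * d ^ t) (fun t => 2 * B * d ^ t)) as [l Hl].
  - intros t. specialize (Hf t). apply Rabs_le_between in Hf. lra.
  - exists (2 * B * / (1 - d)). apply infinite_sum_geometric; auto.
  - exists (l - B * / (1 - d)).
    apply (infinite_sum_ext (fun t => (f t + B * d ^ t) - B * d ^ t)); [intros; ring|].
    apply infinite_sum_minus; auto. apply infinite_sum_geometric; auto.
Qed.

Lemma sum_f_R0_indicator0 N : sum_f_R0 (fun t => if Nat.eqb t 0 then 1 else 0) N = 1.
Proof. induction N as [|N IH]; simpl; [reflexivity|]. rewrite IH. lra. Qed.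

Lemma sum_geometric_tail_le rho d N : 0 <= d < 1 ->
  sum_f_R0 (fun t => if Nat.leb rho t then d ^ t else 0) N <= d ^ rho / (1 - d).
Proof.
  intros Hd.
  assert (Hclosed : sum_f_R0 (fun t => if Nat.leb rho t then d ^ t else 0) N =
                    if Nat.leb rho N then (d ^ rho - d ^ S N) / (1 - d) else 0).
  { induction N as [|N IH]; simpl sum_f_R0.
    - destruct (Nat.leb_spec rho 0); [replace rho with 0%nat by lia; simpl; field|]; lra.
    - rewrite IH. destruct (Nat.leb_spec rho N), (Nat.leb_spec rho (S N)); try lia.
      + simpl. field. lra.
      + replace rho with (S N) by lia. simpl. field. lra.
      + lra. }
  rewrite Hclosed. assert (0 < / (1 - d)) by (apply Rinv_0_lt_compat; lra).
  pose proof (pow_le d rho ltac:(lra)). pose proof (pow_le d (S N) ltac:(lra)).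
  unfold Rdiv. destruct (Nat.leb rho N); nra.
Qed.

Lemma infinite_sum_delayed_loss_ge D l C d rho : 0 <= d < 1 -> 0 <= C -> (1 <= rho)%nat ->
  infinite_sum D l -> D 0%nat = 1 -> (forall t, (1 <= t < rho)%nat -> D t = 0) ->
  (forall t, (rho <= t)%nat -> Rabs (D t) <= C * d ^ t) ->
  1 - C * (d ^ rho / (1 - d)) <= l.
Proof.
  intros Hd HC Hrho HD H0 Hmid Htail.
  apply (Rle_cv_lim (Un := fun _ => 1 - C * (d ^ rho / (1 - d))) (Vn := sum_f_R0 D));
    [|apply Un_cv_const|exact HD].
  intros N. eapply Rle_trans with
    (sum_f_R0 (fun t =>
       (if Nat.eqb t 0 then 1 else 0) - (if Nat.leb rho t then d ^ t else 0) * C) N).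
  - rewrite minus_sum, sum_f_R0_indicator0, <- scal_sum.
    pose proof (sum_geometric_tail_le rho d N Hd). nra.
  - apply sum_Rle. intros t _. destruct (Nat.eqb_spec t 0) as [->|].
    + destruct (Nat.leb_spec rho 0); [lia|]. lra.
    + destruct (Nat.leb_spec rho t).
      * specialize (Htail t ltac:(lia)). apply Rabs_le_between in Htail. lra.
      * rewrite Hmid by lia. lra.
Qed.

Lemma exists_small_discounted_tail C d : 0 < d < 1 -> 0 <= C ->
  exists rho, (1 <= rho)%nat /\ C * (d ^ rho / (1 - d)) < 1.
Proof.
  intros Hd HC.
  destruct (pow_lt_1_zero d ltac:(rewrite Rabs_right; lra) ((1 - d) / (C + 1))) as [N HN].
  { apply Rdiv_lt_0_compat; lra. }
  exists (S N). split; [lia|].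
  specialize (HN (S N) ltac:(lia)). rewrite Rabs_right in HN by (apply Rle_ge, pow_le; lra).
  assert (Hq : d ^ S N / (1 - d) < / (C + 1)).
  { apply Rmult_lt_reg_r with (1 - d); [lra|]. unfold Rdiv in *.
    rewrite Rmult_assoc, Rinv_l, Rmult_1_r by lra. lra. }
  assert (0 <= d ^ S N / (1 - d)) by (apply Rle_mult_inv_pos; [apply pow_le|]; lra).
  assert (C * / (C + 1) < 1).
  { apply Rmult_lt_reg_r with (C + 1); [lra|]. rewrite Rmult_assoc, Rinv_l by lra. lra. }
  nra.
Qed.

Section Model.

Variables (n : nat) (Gs : EG -> Prop) (K : Knowledge).
Hypothesis wf_Gs : forall G, Gs G -> forall m, wf_graph n (G m).
Hypothesis wf_K : knowledge_wf Gs K.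

Lemma graph_sym G k a b : Gs G -> G k a b = G k b a.
Proof. intros HG. apply (wf_Gs G HG k). Qed.

Lemma neighbour_lt G k a b : Gs G -> G k a b = true -> (b < n)%nat.
Proof. intros HG H. apply (wf_Gs G HG k) in H. lia. Qed.

Lemma neighbour_neq G k a b : Gs G -> G k a b = true -> b <> a.
Proof. intros HG H ->. destruct (wf_Gs G HG k) as [_ [Hirr _]]. congruence. Qed.

Lemma same_knowledge_same_nbrs G G' i k : Gs G -> Gs G' ->
  (K G i k (G k) <-> K G' i k (G k)) -> forall x, G k i x = G' k i x.
Proof.
  intros HG HG' Heq x. destruct (wf_K G HG i k) as [HKG _].
  destruct (wf_K G' HG' i k) as [_ Hnb]. apply Hnb, Heq, HKG.
Qed.

Lemma obs_equiv_refl i G p : obs_equiv n K i G p G p.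
Proof. repeat split; auto; tauto. Qed.

Lemma in_hist_agent_lt G (q : Hist) i k : (i < n)%nat ->
  In q (hist n G (length q)) -> (k < length q)%nat -> (i < length (nth k q []))%nat.
Proof. intros Hi Hq Hk. apply in_hist in Hq. destruct (proj2 Hq k Hk) as [H _]. lia. Qed.

(* [i] knows its own flip, and no neighbour's action toward [i] is touched. *)
Lemma obs_equiv_flip_in_hist i j m G p G' p' : (i < n)%nat -> Gs G -> Gs G' ->
  In p (hist n G (length p)) -> In p' (hist n G' (length p')) -> (m < length p)%nat ->
  obs_equiv n K i G p G' p' ->
  obs_equiv n K i G (flip_in_hist n i j m G p) G' (flip_in_hist n i j m G' p').
Proof.
  intros Hi HG HG' Hp Hp' Hm [HL [HKn Hact]].
  unfold obs_equiv. rewrite !length_flip_in_hist. split; [auto|split; [auto|]].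
  intros k Hk. split.
  - destruct (Nat.eq_dec k m) as [->|].
    + rewrite !nth_flip_in_hist_eq; try (apply in_hist_agent_lt with G'; auto; lia);
        try (apply in_hist_agent_lt with G; auto; lia); try lia.
      rewrite (proj1 (Hact m Hk)). apply flip_toward_ext.
      apply same_knowledge_same_nbrs; auto. apply HKn. lia.
    + rewrite !nth_flip_in_hist_other_round; auto. apply Hact; auto.
  - intros l Hl. pose proof (neighbour_neq G k i l HG Hl).
    rewrite !nth_flip_in_hist_other_agent; auto. apply Hact; auto.
Qed.

Lemma deviation_valid sigma i j m : (i < n)%nat ->
  valid_strategy n Gs K i (sigma i) -> valid_strategy n Gs K i (deviation n i j m sigma).
Proof.
  intros Hi [Hdist Hmeas]. split.
  - intros G p HG Hp. unfold deviation.
    destruct (Nat.ltb (length p) m); [apply Hdist; auto|].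
    destruct (Nat.eqb (length p) m).
    + destruct (Hdist G p HG Hp) as [Hnn Hsum]. split.
      * intros a Ha. apply Hnn, in_all_lists_flip_toward; auto.
      * rewrite (sum_all_lists_flip_toward n i j (G m) _ (sigma i G p)). auto.
    + pose proof (flip_in_hist_hist n i j m G p Hp) as Hs.
      rewrite <- (length_flip_in_hist n i j m G p) in Hs at 1.
      destruct (Hdist G _ HG Hs) as [Hnn Hsum]. rewrite length_flip_in_hist in Hnn, Hsum. auto.
  - intros G p G' p' HG HG' Hp Hp' Hobs a. pose proof Hobs as [HL [HKn _]].
    unfold deviation. rewrite <- HL.
    destruct (Nat.ltb_spec (length p) m); [apply Hmeas; auto|].
    destruct (Nat.eqb_spec (length p) m) as [<-|].
    + rewrite (flip_toward_ext n i j (G (length p)) (G' (length p))).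
      * apply Hmeas; auto.
      * apply same_knowledge_same_nbrs, HKn; auto.
    + apply Hmeas; auto; try (rewrite length_flip_in_hist; apply flip_in_hist_hist; auto).
      apply obs_equiv_flip_in_hist; auto; lia.
Qed.

Lemma round_prob_nonneg tau G (q : Hist) a : valid_protocol n Gs K tau -> Gs G ->
  In q (hist n G (length q)) -> In a (round_profiles n G (length q)) ->
  0 <= prod_over (seq 0 n) (fun o => tau o G q (nth o a [])).
Proof.
  intros Hv HG Hq Ha. apply prod_over_nonneg. intros o Ho. apply in_seq in Ho.
  apply (proj1 (proj1 (Hv o ltac:(lia)) G q HG Hq)).
  apply in_all_lists. apply in_round_profiles in Ha. apply Ha. lia.
Qed.

Lemma round_prob_sum1 tau G (q : Hist) : valid_protocol n Gs K tau -> Gs G ->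
  In q (hist n G (length q)) ->
  sum_over (round_profiles n G (length q))
    (fun a => prod_over (seq 0 n) (fun o => tau o G q (nth o a []))) = 1.
Proof.
  intros Hv HG Hq. apply (sum_round_distribution n G (length q) (fun o => tau o G q)).
  intros o Ho. apply (proj2 (proj1 (Hv o Ho) G q HG Hq)).
Qed.

Lemma prob_ext_distribution tau G : valid_protocol n Gs K tau -> Gs G ->
  forall r (q : Hist), In q (hist n G (length q)) ->
  sum_over (ext n G (length q) r) (prob_ext n tau G q) = 1 /\
  forall e, In e (ext n G (length q) r) -> 0 <= prob_ext n tau G q e.
Proof.
  intros Hv HG. induction r as [|r IH]; intros q Hq.
  { split; [cbn; lra|]. intros e [<-|[]]. simpl; lra. }
  assert (IHa : forall a, In a (round_profiles n G (length q)) ->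
     sum_over (ext n G (S (length q)) r) (prob_ext n tau G (q ++ [a])) = 1 /\
     forall e, In e (ext n G (S (length q)) r) -> 0 <= prob_ext n tau G (q ++ [a]) e).
  { intros a Ha. pose proof (IH _ (hist_snoc n G q a Hq Ha)) as Hr.
    rewrite length_app, Nat.add_1_r in Hr. exact Hr. }
  split.
  - rewrite sum_over_ext_succ. cbn [prob_ext].
    rewrite (sum_over_ext _ _
      (fun a => prod_over (seq 0 n) (fun o => tau o G q (nth o a [])) * 1)).
    + rewrite sum_over_scal_r, Rmult_1_r. apply round_prob_sum1; auto.
    + intros a Ha. rewrite sum_over_scal_l, (proj1 (IHa a Ha)). reflexivity.
  - intros e He. cbn [ext] in He. apply in_flat_map in He. destruct He as [a [Ha He]].
    apply in_map_iff in He. destruct He as [e' [<- He']]. cbn [prob_ext].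
    apply Rmult_le_pos; [apply round_prob_nonneg|apply IHa]; auto.
Qed.

Lemma exp_round_utility_abs_le beta alpha pi tau G (q : Hist) i t :
  valid_protocol n Gs K tau -> Gs G -> In q (hist n G (length q)) ->
  Rabs (exp_round_utility n beta alpha pi tau G q i t) <= INR n * utility_bound beta alpha pi.
Proof.
  intros Hv HG Hq. unfold exp_round_utility.
  destruct (prob_ext_distribution tau G Hv HG (S t) q Hq) as [Hs Hn].
  eapply Rle_trans; [apply sum_over_abs|].
  eapply Rle_trans.
  - apply (sum_over_le _ _ (fun e => prob_ext n tau G q e * (INR n * utility_bound beta alpha pi))).
    intros e He. rewrite Rabs_mult, (Rabs_right (prob_ext _ _ _ _ _)) by (apply Rle_ge; auto).
    apply Rmult_le_compat_l; auto. apply round_utility_abs_le.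
  - rewrite sum_over_scal_r, Hs. lra.
Qed.

Lemma exp_round_utility_certain beta alpha pi tau G (q : Hist) i c :
  valid_protocol n Gs K tau -> Gs G -> In q (hist n G (length q)) ->
  fits n (G (length q)) c -> (forall o, (o < n)%nat -> tau o G q (nth o c []) = 1) ->
  exp_round_utility n beta alpha pi tau G q i 0 = round_utility n beta alpha pi (G (length q)) c i.
Proof.
  intros Hv HG Hq Hc Hw. unfold exp_round_utility. rewrite sum_over_ext_succ. cbn [ext].
  rewrite (sum_over_ext _ _ (fun a => prod_over (seq 0 n) (fun o => tau o G q (nth o a [])) *
                                      round_utility n beta alpha pi (G (length q)) a i)).
  - apply (sum_over_point_mass _ _ (fun a => round_utility n beta alpha pi (G (length q)) a i)).
    + intros a Ha. apply round_prob_nonneg; auto.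
    + apply round_prob_sum1; auto.
    + apply in_round_profiles; auto.
    + apply prod_over_eq1. intros o Ho. apply in_seq in Ho. apply Hw. lia.
  - intros a _. rewrite sum_over_cons, sum_over_nil. cbn [prob_ext last].
    rewrite Nat.add_0_r, Rmult_1_r, Rplus_0_r. reflexivity.
Qed.

Definition cooperative (sigma : Protocol) : Prop :=
  forall G p o, Gs G -> In p (hist n G (length p)) -> all_coop p -> (o < n)%nat ->
    sigma o G p (repeat Coop (deg n (G (length p)) o)) = 1.

(** * Coupling the protocol with the deviation *)

Section Coupling.

Variables (sigma : Protocol) (i j m rho : nat) (G : EG).
Hypothesis HG : Gs G.
Hypothesis Hsigma : valid_protocol n Gs K sigma.
Hypothesis Hij : G m i j = true.
Hypothesis late_PO : forall l m', punishment_opportunity G i j m l m' -> (m + rho <= m')%nat.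

Let dev := deviate sigma i (deviation n i j m sigma).

Definition untouched (k o : nat) : Prop := o = i \/ ~ influences_avoiding G i j m o k.

Definition transport (k o : nat) (x : Action) : Action :=
  if (Nat.eqb k m && Nat.eqb o i)%bool then flip_toward n i j (G m) x else x.

(* [q] is meant to be played under [sigma] and [q'] under [dev]. *)
Definition coupled (q q' : Hist) : Prop :=
  length q = length q' /\
  forall k o, (k < length q)%nat -> (o < n)%nat -> untouched k o ->
    nth o (nth k q []) [] = transport k o (nth o (nth k q' []) []).

Lemma i_lt : (i < n)%nat.
Proof. destruct (wf_Gs G HG m) as [_ [_ Hb]]. apply (Hb i j Hij). Qed.

Lemma j_lt : (j < n)%nat.
Proof. destruct (wf_Gs G HG m) as [_ [_ Hb]]. apply (Hb i j Hij). Qed.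

Lemma transport_id k o x : k <> m \/ o <> i -> transport k o x = x.
Proof.
  intros H. unfold transport.
  destruct H as [H|H]; apply Nat.eqb_neq in H; rewrite H, ?andb_false_r; reflexivity.
Qed.

Lemma transport_self_eq x : transport m i x = flip_toward n i j (G m) x.
Proof. unfold transport. rewrite !Nat.eqb_refl. reflexivity. Qed.

Lemma untouched_earlier k k' o : untouched k o -> (k' <= k)%nat -> untouched k' o.
Proof.
  intros [H|H] Hk; [left; auto|right]. intros Hin. apply H.
  eapply influences_avoiding_later; eauto.
Qed.

(* A neighbour of [i] reached before round [m + rho] would be a timely punishment opportunity. *)
Lemma untouched_neighbour k l : (k < m + rho)%nat -> G k i l = true -> untouched k l.
Proof.
  intros Hk Hl. right. intros Hin. assert (m + rho <= k)%nat; [|lia].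
  apply (late_PO l k). split; auto.
Qed.

Lemma deviation_unfold p x :
  deviation n i j m sigma G p x = sigma i G (flip_in_hist n i j m G p) (transport (length p) i x).
Proof.
  unfold deviation. destruct (Nat.ltb_spec (length p) m).
  - rewrite flip_in_hist_short, transport_id; auto; lia.
  - destruct (Nat.eqb_spec (length p) m) as [E|].
    + rewrite flip_in_hist_short, E, transport_self_eq; auto; lia.
    + rewrite transport_id; auto.
Qed.

Lemma obs_equiv_coupled_self q q' :
  In q' (hist n G (length q')) -> coupled q q' -> (length q < m + rho)%nat ->
  obs_equiv n K i G q G (flip_in_hist n i j m G q').
Proof.
  intros Hq' [HL HR] Hk. split; [rewrite length_flip_in_hist; auto|split; [tauto|]].
  intros k Hkq. split.
  - rewrite (HR k i) by (auto using i_lt; left; auto).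
    destruct (Nat.eq_dec k m) as [->|].
    + rewrite transport_self_eq, nth_flip_in_hist_eq; auto; [lia|].
      apply in_hist_agent_lt with G; auto using i_lt; lia.
    + rewrite transport_id, nth_flip_in_hist_other_round; auto.
  - intros l Hl. pose proof (neighbour_neq G k i l HG Hl).
    rewrite nth_flip_in_hist_other_agent, (HR k l), transport_id; auto.
    + eapply neighbour_lt; eauto.
    + apply untouched_neighbour; auto; lia.
Qed.

Lemma obs_equiv_coupled_other q q' o : coupled q q' -> (o < n)%nat -> o <> i ->
  ~ influences_avoiding G i j m o (length q) -> obs_equiv n K o G q G q'.
Proof.
  intros [HL HR] Ho Hoi Hno. split; [auto|split; [tauto|]].
  intros k Hkq. split.
  - rewrite (HR k o), transport_id; auto.
    eapply untouched_earlier; [right; eauto|lia].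
  - intros l Hl. pose proof (neighbour_lt G k o l HG Hl) as Hln.
    destruct (Nat.eq_dec l i) as [->|Hli].
    + rewrite (HR k i) by (auto using i_lt; left; auto).
      destruct (Nat.eq_dec k m) as [->|].
      * assert (o <> j) by (intros ->; apply Hno, influences_avoiding_self; lia).
        rewrite transport_self_eq, act_toward_flip_toward_neq; auto using j_lt.
      * rewrite transport_id; auto.
    + rewrite (HR k l), transport_id; auto. right. intros Hin. apply Hno.
      eapply influences_avoiding_step; eauto. rewrite graph_sym; auto.
Qed.

Lemma deviation_agrees q q' o x :
  In q (hist n G (length q)) -> In q' (hist n G (length q')) -> coupled q q' ->
  (length q < m + rho)%nat -> (o < n)%nat -> untouched (length q) o ->
  dev o G q' x = sigma o G q (transport (length q) o x).
Proof.
  intros Hq Hq' Hc Hk Ho Hu. pose proof (proj1 Hc) as HL. unfold dev, deviate.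
  destruct (Nat.eqb_spec o i) as [->|Hoi].
  - rewrite deviation_unfold, <- HL. symmetry.
    apply (proj2 (Hsigma i i_lt)); auto.
    + rewrite length_flip_in_hist. apply flip_in_hist_hist; auto.
    + apply obs_equiv_coupled_self; auto.
  - destruct Hu as [|Hu]; [contradiction|]. rewrite transport_id by auto. symmetry.
    apply (proj2 (Hsigma o Ho)); auto. apply obs_equiv_coupled_other; auto.
Qed.

Lemma coupled_snoc q q' a a' : coupled q q' ->
  (forall o, (o < n)%nat -> untouched (length q) o ->
     nth o a [] = transport (length q) o (nth o a' [])) ->
  coupled (q ++ [a]) (q' ++ [a']).
Proof.
  intros [HL HR] Ha. split; [rewrite !length_app; simpl; lia|].
  intros k o Hk Ho Hu. rewrite length_app in Hk; simpl in Hk.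
  destruct (Nat.lt_ge_cases k (length q)).
  - rewrite !app_nth1 by lia. apply HR; auto.
  - assert (k = length q) as -> by lia. rewrite app_nth2, Nat.sub_diag by lia.
    rewrite HL, app_nth2, Nat.sub_diag by lia. rewrite <- HL. apply Ha; auto.
Qed.

Lemma coupled_expectations_eq : forall r (q q' : Hist) (F F' : Hist -> R),
  In q (hist n G (length q)) -> In q' (hist n G (length q')) -> coupled q q' ->
  (length q + r <= m + rho)%nat ->
  (forall e e', In e (ext n G (length q) r) -> In e' (ext n G (length q) r) ->
     coupled (q ++ e) (q' ++ e') -> F e = F' e') ->
  sum_over (ext n G (length q) r) (fun e => prob_ext n sigma G q e * F e) =
  sum_over (ext n G (length q) r) (fun e => prob_ext n dev G q' e * F' e).
Proof.
  induction r as [|r IH]; intros q q' F F' Hq Hq' Hc Hr HF.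
  { cbn. rewrite (HF [] []); simpl; rewrite ?app_nil_r; auto. }
  assert (HL : length q' = length q) by (symmetry; apply Hc).
  rewrite !sum_prob_ext_succ.
  apply (sum_round_coupling n G (length q) (fun o => sigma o G q) (fun o => dev o G q')
           (untouched (length q)) (transport (length q))).
  - intros o x Ho Hu _. apply deviation_agrees; auto. lia.
  - intros o x Ho Hu Hx. unfold transport. destruct (_ && _)%bool; auto.
    split; [apply in_all_lists_flip_toward; auto|apply flip_toward_involutive].
  - intros o f Ho Hu. unfold transport. destruct (_ && _)%bool; auto.
    apply sum_all_lists_flip_toward.
  - intros o Ho Hu. assert (Hoi : o <> i) by (intros ->; apply Hu; left; auto).
    unfold dev, deviate. apply Nat.eqb_neq in Hoi. rewrite Hoi.
    split; [|rewrite <- HL]; apply (proj1 (Hsigma o Ho)); auto.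
  - intros a a' Ha Ha' Hg.
    assert (Lqa : length (q ++ [a]) = S (length q)) by (rewrite length_app; simpl; lia).
    rewrite <- Lqa. apply IH.
    + apply hist_snoc; auto.
    + apply hist_snoc; [auto|rewrite HL; auto].
    + apply coupled_snoc; auto.
    + lia.
    + intros e e' He He' Hce. rewrite Lqa in He, He'. apply HF.
      * cbn [ext]. apply in_flat_map. exists a. split; auto. apply in_map; auto.
      * cbn [ext]. apply in_flat_map. exists a'. split; auto. apply in_map; auto.
      * rewrite <- !app_assoc in Hce. auto.
Qed.

Lemma deviation_protocol_valid : valid_protocol n Gs K dev.
Proof.
  intros o Ho. unfold dev, deviate. destruct (Nat.eqb_spec o i) as [->|]; auto.
  apply deviation_valid; auto.
Qed.

Lemma exp_round_utility_first_round beta alpha pi : cooperative sigma ->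
  exp_round_utility n beta alpha pi dev G (coop_hist n G m) i 0 =
  exp_round_utility n beta alpha pi sigma G (coop_hist n G m) i 0 + 1.
Proof.
  intros Hcoop.
  assert (Hcoop0 : forall o, (o < n)%nat ->
            sigma o G (coop_hist n G m) (coop_action n (G m) o) = 1).
  { intros o Ho. unfold coop_action. rewrite <- (length_coop_hist n G m) at 2.
    apply Hcoop; auto using coop_hist_hist, all_coop_coop_hist. }
  pose proof (coop_hist_hist n G m) as Hp0. rewrite length_coop_hist in Hp0.
  rewrite (exp_round_utility_certain _ _ _ dev G _ i (flipped_profile n i j (G m))),
          (exp_round_utility_certain _ _ _ sigma G _ i (coop_profile n (G m))), length_coop_hist;
    rewrite ?length_coop_hist; auto using deviation_protocol_valid, coop_profile_fits,
    flipped_profile_fits.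
  - apply round_utility_flipped_profile; auto.
  - intros o Ho. unfold coop_profile. rewrite nth_map_seq; auto.
  - intros o Ho. unfold flipped_profile, dev, deviate. rewrite nth_map_seq by auto.
    destruct (Nat.eqb_spec o i) as [->|]; auto.
    rewrite deviation_unfold, flip_in_hist_short, length_coop_hist, transport_self_eq,
      flip_toward_involutive by (rewrite length_coop_hist; lia).
    auto.
Qed.

Lemma coupled_refl q : (length q <= m)%nat -> coupled q q.
Proof. intros Hq. split; auto. intros k o Hk _ _. rewrite transport_id; auto; lia. Qed.

Lemma round_utility_coupled beta alpha pi p p' k : coupled p p' ->
  (m < k < m + rho)%nat -> (k < length p)%nat ->
  round_utility n beta alpha pi (G k) (nth k p []) i =
  round_utility n beta alpha pi (G k) (nth k p' []) i.
Proof.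
  intros [_ HR] Hk Hkp. unfold round_utility. apply sum_over_ext.
  intros l Hl. apply in_nbrs in Hl. destruct Hl as [Hl Hil].
  rewrite (HR k i), (HR k l), !transport_id; auto using i_lt; try lia.
  - apply untouched_neighbour; auto; lia.
  - left; auto.
Qed.

Lemma exp_round_utility_deviation_eq beta alpha pi q t :
  In q (hist n G (length q)) -> length q = m -> (1 <= t < rho)%nat ->
  exp_round_utility n beta alpha pi sigma G q i t =
  exp_round_utility n beta alpha pi dev G q i t.
Proof.
  intros Hq Hlen Ht. unfold exp_round_utility.
  apply coupled_expectations_eq; [auto|auto|apply coupled_refl; lia|lia|].
  intros e e' He He' Hc.
  apply in_ext in He as [Le _]. apply in_ext in He' as [Le' _].
  rewrite !last_nth with (t := t) by auto.
  rewrite <- (app_nth2_plus q e), <- (app_nth2_plus q e'), Hlen.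
  apply round_utility_coupled; auto; try lia.
  rewrite length_app; lia.
Qed.

Lemma discounted_exp_round_utility_abs_le beta alpha pi delta tau q t :
  0 < delta < 1 -> valid_protocol n Gs K tau -> In q (hist n G (length q)) ->
  Rabs (delta ^ t * exp_round_utility n beta alpha pi tau G q i t) <=
  INR n * utility_bound beta alpha pi * delta ^ t.
Proof.
  intros Hd Hv Hq. rewrite Rabs_mult, Rabs_right, Rmult_comm by (apply Rle_ge, pow_le; lra).
  apply Rmult_le_compat_r; [apply pow_le; lra|]. apply exp_round_utility_abs_le; auto.
Qed.

Lemma util_deviation_gain beta alpha pi delta : 0 < delta < 1 -> (1 <= rho)%nat ->
  cooperative sigma ->
  1 - 2 * (INR n * utility_bound beta alpha pi) * (delta ^ rho / (1 - delta)) <=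
  util n beta alpha pi delta dev G (coop_hist n G m) i -
  util n beta alpha pi delta sigma G (coop_hist n G m) i.
Proof.
  intros Hd Hrho Hcoop.
  set (p0 := coop_hist n G m). set (B := INR n * utility_bound beta alpha pi).
  pose proof (coop_hist_hist n G m) as Hp0. fold p0 in Hp0.
  pose proof (fun tau t Hv => discounted_exp_round_utility_abs_le beta alpha pi delta tau p0 t
                                Hd Hv Hp0) as Hbound.
  destruct (summable_of_geometric_bound
              (fun t => delta ^ t * exp_round_utility n beta alpha pi sigma G p0 i t) B delta)
    as [ls Hls]; [lra|auto|].
  destruct (summable_of_geometric_bound
              (fun t => delta ^ t * exp_round_utility n beta alpha pi dev G p0 i t) B delta)
    as [ld Hld]; [lra|auto using deviation_protocol_valid|].
  unfold util. rewrite (series_value_eq _ _ Hls), (series_value_eq _ _ Hld).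
  apply (infinite_sum_delayed_loss_ge
           (fun t => delta ^ t * exp_round_utility n beta alpha pi dev G p0 i t -
                     delta ^ t * exp_round_utility n beta alpha pi sigma G p0 i t));
    auto using infinite_sum_minus; try lra.
  - pose proof (utility_bound_nonneg beta alpha pi). pose proof (pos_INR n). unfold B. nra.
  - simpl pow. unfold p0. rewrite exp_round_utility_first_round; auto. ring.
  - intros t Ht. rewrite exp_round_utility_deviation_eq; [ring|auto|apply length_coop_hist|lia].
  - intros t Ht. unfold Rminus at 1. eapply Rle_trans; [apply Rabs_triang|].
    rewrite Rabs_Ropp.
    pose proof (Hbound dev t deviation_protocol_valid). pose proof (Hbound sigma t Hsigma).
    unfold B. lra.
Qed.

End Coupling.

(** * Beliefs at the all-cooperative history *)

Lemma prob_ext_pos tau G : Gs G -> (forall o, (o < n)%nat -> completely_mixed n Gs K o (tau o)) ->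
  forall r (q : Hist), In q (hist n G (length q)) ->
  forall e, In e (ext n G (length q) r) -> 0 < prob_ext n tau G q e.
Proof.
  intros HG Hmix. induction r as [|r IH]; intros q Hq e He.
  { destruct He as [<-|[]]. simpl; lra. }
  cbn [ext] in He. apply in_flat_map in He. destruct He as [a [Ha He]].
  apply in_map_iff in He. destruct He as [e' [<- He']]. cbn [prob_ext].
  apply Rmult_lt_0_compat.
  - apply prod_over_pos. intros o Ho. apply in_seq in Ho.
    apply (proj2 (Hmix o ltac:(lia))); auto.
    apply in_all_lists. apply in_round_profiles in Ha. apply Ha. lia.
  - apply IH; [apply hist_snoc; auto|]. rewrite length_app, Nat.add_1_r. auto.
Qed.

Lemma prob_ext_coop_cv (sc : nat -> Protocol) sigma G : Gs G -> cooperative sigma ->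
  (forall o G p a, (o < n)%nat -> Gs G -> In p (hist n G (length p)) ->
     In a (all_lists (deg n (G (length p)) o)) -> Un_cv (fun c => sc c o G p a) (sigma o G p a)) ->
  forall r (q : Hist), In q (hist n G (length q)) -> all_coop q ->
  forall e, In e (ext n G (length q) r) -> all_coop e ->
  Un_cv (fun c => prob_ext n (sc c) G q e) 1.
Proof.
  intros HG Hcoop Hcv. induction r as [|r IH]; intros q Hq Hcq e He Hce.
  { destruct He as [<-|[]]. exact (Un_cv_const 1). }
  cbn [ext] in He. apply in_flat_map in He. destruct He as [a [Ha He]].
  apply in_map_iff in He. destruct He as [e' [<- He']]. cbn [prob_ext].
  inversion Hce as [|? ? Hca Hce']; subst.
  apply in_round_profiles in Ha as Hfit. rewrite <- (Rmult_1_l 1). apply CV_mult.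
  - rewrite <- (prod_over_eq1 (seq 0 n) (fun o => sigma o G q (nth o a []))).
    + apply (prod_over_cv _ (fun c o => sc c o G q (nth o a []))). intros o Ho.
      apply in_seq in Ho. apply Hcv; auto; [lia|]. apply in_all_lists, Hfit. lia.
    + intros o Ho. apply in_seq in Ho.
      assert (Hco : Forall (fun x => x = Coop) (nth o a [])).
      { destruct (Nat.lt_ge_cases o (length a)).
        - rewrite Forall_forall in Hca. apply Hca, nth_In; auto.
        - rewrite nth_overflow; auto. }
      rewrite (all_coop_action _ Hco), (proj2 Hfit o) by lia. apply Hcoop; auto. lia.
  - apply IH; auto.
    + apply hist_snoc; auto.
    + apply Forall_app; auto.
    + rewrite length_app, Nat.add_1_r. auto.
Qed.

(* Consistent beliefs are certain that the all-cooperative history has occurred. *)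
Lemma util_info_coop_hist beta alpha pi delta sigma mu G i m tau :
  Gs G -> (i < n)%nat -> cooperative sigma -> consistent_beliefs n Gs K sigma mu ->
  util_info n K beta alpha pi delta mu tau G i G (coop_hist n G m) =
  util n beta alpha pi delta tau G (coop_hist n G m) i.
Proof.
  intros HG Hi Hcoop [sc [Hmix [Hcv Hmu]]].
  set (p0 := coop_hist n G m).
  pose proof (coop_hist_hist n G m) as Hp0. fold p0 in Hp0.
  assert (Hdist : forall c, valid_protocol n Gs K (sc c)) by (intros c o Ho; apply Hmix; auto).
  assert (Hnil : In (@nil Profile) (hist n G 0)) by (left; auto).
  unfold util_info.
  apply (conditional_limit_point_mass _ _ (fun c => prob_hist n (sc c) G) (mu G i G p0)
           (fun p => util n beta alpha pi delta tau G p i)).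
  - exact Hp0.
  - apply obs_equiv_refl.
  - intros c p Hp. apply (prob_ext_distribution (sc c) G (Hdist c) HG (length p0) [] Hnil); auto.
  - intros c. apply (prob_ext_distribution (sc c) G (Hdist c) HG (length p0) [] Hnil).
  - intros c. apply (prob_ext_pos (sc c) G HG (Hmix c) (length p0) [] Hnil); auto.
  - apply (prob_ext_coop_cv sc sigma G HG Hcoop Hcv (length p0) [] Hnil); auto.
    + constructor.
    + apply all_coop_coop_hist.
  - intros p Hp Hpr. apply Hmu; auto.
Qed.

End Model.

Theorem theorem1 (n : nat) (beta alpha pi delta : R)
  (Halpha : 0 <= alpha) (Hdelta : 0 < delta < 1)
  (Gs : EG -> Prop) (HGs : forall G, Gs G -> forall m, wf_graph n (G m))
  (K : Knowledge) (HK : knowledge_wf Gs K) :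
  ~ restricted_by_timely_punishments Gs ->
  forall sigma : Protocol, ~ enforces_accountability n Gs K beta alpha pi delta sigma.
Proof.
  intros Huntimely sigma [Hcoop [Hvalid [mu [Hcons Hbest]]]].
  set (B := INR n * utility_bound beta alpha pi).
  destruct (exists_small_discounted_tail (2 * B) delta Hdelta) as [rho [Hrho Hsmall]].
  { pose proof (utility_bound_nonneg beta alpha pi). pose proof (pos_INR n). unfold B. nra. }
  destruct (exists_late_punishment_edge Gs rho Huntimely) as [G [i [j [m [HG [Hij Hlate]]]]]];
    [lia|].
  pose proof (i_lt n Gs HGs i j m G HG Hij) as Hi.
  pose proof (coop_hist_hist n G m) as Hp0.
  assert (Hno_gain :
    util n beta alpha pi delta (deviate sigma i (deviation n i j m sigma)) G (coop_hist n G m) i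
    <= util n beta alpha pi delta sigma G (coop_hist n G m) i).
  { rewrite <- !(util_info_coop_hist n Gs K beta alpha pi delta sigma mu) by auto.
    apply Rge_le, Hbest; auto using deviation_valid.
    exists (coop_hist n G m). split; auto. apply obs_equiv_refl. }
  pose proof (util_deviation_gain n Gs K HGs HK sigma i j m rho G HG Hvalid Hij Hlate
                beta alpha pi delta Hdelta Hrho Hcoop) as Hgain.
  fold B in Hgain. lra.
Qed.
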